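(* Let $\mathbb{G}$ be an undirected, unweighted random network model which is strongly idemetric (SI) and uniformly sparse (US). Then $\mathbb{G}$ is a weak ball expander (PUMP).
   Context: A random network model $\mathbb{G}$ assigns to every $n\in\mathbb{N}$ a probability distribution over graphs with $n$ nodes; $G_n$ denotes a graph sampled from it. $d(u,v)$ is the graph distance (length of a shortest path, $\infty$ if none). For a node $u$, $B_u(r)$ is the set of nodes at distance at most $r$ from $u$, and $\overline{B_u(r)}$ its complement. For node sets $X,Y$, $e(X,Y)$ is the number of edges with one endpoint in $X$ and one in $Y$. PUMP: for every $0<\epsilon<\tfrac12$ there exists $\alpha_\epsilon>0$ such that for all sufficiently large $n$, if $u$ is chosen uniformly at random from $G_n$ then with probability $>1-\epsilon$ both (i) there exists $r$ with $|B_u(r)|\ge \epsilon n$, and (ii) for all $r$ with $\epsilon n\le |B_u(r)|\le (1-\epsilon)n$, $e(B_u(r),\overline{B_u(r)})\ge \alpha_\epsilon |B_u(r)|$. US: for each $\epsilon>0$ there is a constant $C_\epsilon$ such that for all sufficiently large $n$, with probability at least $1-\epsilon$, for any set of $y\ge\epsilon n$ edges of $G_n$ every node cover (set of nodes meeting every edge of the set) has size at least $y/C_\epsilon$. SI: there exist a finite-valued function $f$ and, for each $\epsilon>0$, a bound $b_\epsilon$ independent of $n$, such that for all sufficiently large $n$, if $u,v$ are chosen uniformly at random from $G_n$ then $|f(n)-d(u,v)|<b_\epsilon$ with probability $>1-\epsilon$. *)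

From HB Require Import structures.
From mathcomp Require Import all_boot all_order all_algebra.
From mathcomp Require Import boolp reals.
Set Implicit Arguments. Unset Strict Implicit. Unset Printing Implicit Defensive.
Import Order.TTheory GRing.Theory Num.Theory.
Local Open Scope ring_scope.

Definition graph (n : nat) := {ffun 'I_n -> {set 'I_n}}.

Definition simple_graph n (g : graph n) : bool :=
  [forall u, u \notin g u] && [forall u, forall v, (v \in g u) == (u \in g v)].

Fixpoint ball n (g : graph n) (u : 'I_n) (r : nat) : {set 'I_n} :=
  match r with
  | 0 => [set u]
  | r'.+1 => ball g u r' :|: \bigcup_(w in ball g u r') g w
  end.

Definition dist_is n (g : graph n) (u v : 'I_n) (k : nat) : Prop :=
  v \in ball g u k /\ (forall j, (j < k)%N -> v \notin ball g u j).

(* e(X, complement X): edges with one endpoint in X and the other in Y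
   (counted as ordered pairs (x,y), x in X, y in Y; exact for disjoint X, Y). *)
Definition e_between n (g : graph n) (X Y : {set 'I_n}) : nat :=
  #|[set p : 'I_n * 'I_n | [&& p.1 \in X, p.2 \in Y & p.2 \in g p.1]]|.

Definition is_edge n (g : graph n) (e : {set 'I_n}) : bool :=
  [exists a, exists b, (e == [set a; b]) && (b \in g a) && (a != b)].

Definition node_cover n (S : {set {set 'I_n}}) (X : {set 'I_n}) : bool :=
  [forall e in S, ~~ [disjoint e & X]].

Record random_model (R : realType) := RandomModel {
  Pr : forall n, {ffun graph n -> R};
  Pr_ge0 : forall n g, 0 <= Pr n g;
  Pr_sum1 : forall n, \sum_(g : graph n) Pr n g = 1;
  Pr_simple : forall n (g : graph n), 0 < Pr n g -> simple_graph g
}.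

Definition prob_graph R (M : random_model R) n (E : graph n -> Prop) : R :=
  \sum_(g : graph n) Pr M n g * (`[< E g >])%:R.

Definition prob_node R (M : random_model R) n (E : graph n -> 'I_n -> Prop) : R :=
  \sum_(g : graph n) Pr M n g * (#|[set u | `[< E g u >]]|%:R / n%:R).

Definition prob_pair R (M : random_model R) n
    (E : graph n -> 'I_n -> 'I_n -> Prop) : R :=
  \sum_(g : graph n) Pr M n g *
    (#|[set p : 'I_n * 'I_n | `[< E g p.1 p.2 >]]|%:R / (n * n)%:R).

Definition SI R (M : random_model R) : Prop :=
  exists f : nat -> R, forall eps : R, 0 < eps ->
    exists b : R, exists N : nat, forall n, (N <= n)%N ->
      prob_pair M (n:=n) (fun g u v => exists k, dist_is g u v k /\ `|f n - k%:R| < b)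
        > 1 - eps.

Definition US R (M : random_model R) : Prop :=
  forall eps : R, 0 < eps ->
    exists C : R, 0 < C /\ exists N : nat, forall n, (N <= n)%N ->
      prob_graph M (n:=n) (fun g => forall S : {set {set 'I_n}},
          (forall e, e \in S -> is_edge g e) ->
          eps * n%:R <= #|S|%:R ->
          forall X : {set 'I_n}, node_cover S X -> #|S|%:R / C <= #|X|%:R)
        >= 1 - eps.

Definition PUMP R (M : random_model R) : Prop :=
  forall eps : R, 0 < eps -> eps < 2^-1 ->
    exists alpha : R, 0 < alpha /\ exists N : nat, forall n, (N <= n)%N ->
      prob_node M (n:=n) (fun g u =>
          (exists r, eps * n%:R <= #|ball g u r|%:R) /\
          (forall r, eps * n%:R <= #|ball g u r|%:R ->
                     #|ball g u r|%:R <= (1 - eps) * n%:R ->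
                     alpha * #|ball g u r|%:R <= (e_between g (ball g u r) (~: ball g u r))%:R))
        > 1 - eps.

(* Let L_j = B_u(j+1) minus B_u(j) be the j-th layer around a root u. Every node of
   L_(j+1) has a neighbour in L_j and these parent edges are distinct, so uniform
   sparsity bounds |L_(j+1)| by a constant times |L_j| as soon as |L_(j+1)| is
   linear in n.  Iterating, with high probability a layer of size >= eta n forces
   every one of the L layers before it to have size >= alpha n.
   By strong idemetricity and Markov's inequality, for most roots u all but
   eps n / 2 nodes lie at a distance from u within a window of width L.  A ball
   B_u(r) with >= eps n nodes meets this window, so every node of the window
   outside B_u(r) lies in one of the layers L_r, ..., L_(r+L-1).  If all of them
   are small, B_u(r) misses fewer than eps n nodes; otherwise |L_r| >= alpha n, and
   L_r is dominated by the edge boundary of B_u(r). *)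

From mathcomp Require Import all_boot all_order all_algebra.
From mathcomp Require Import boolp reals.
From mathcomp Require Import ring lra zify.
Set Implicit Arguments. Unset Strict Implicit. Unset Printing Implicit Defensive.
Import Order.TTheory GRing.Theory Num.Theory.
Local Open Scope ring_scope.

Lemma leq_card_bigcup (T I : finType) (F : I -> {set T}) :
  (#|\bigcup_i F i| <= \sum_i #|F i|)%N.
Proof.
elim/big_rec2: _ => [|i x y _ le_xy]; first by rewrite cards0.
by apply: leq_trans (leq_card_setU _ _) _; rewrite leq_add2l.
Qed.

Lemma card_set_pairs (T1 T2 : finType) (P : T1 -> T2 -> bool) :
  #|[set p : T1 * T2 | P p.1 p.2]| = (\sum_x #|[set y | P x y]|)%N.
Proof.
rewrite -sum1_card (eq_bigl (fun p : T1 * T2 => P p.1 p.2)) => [|p]; last by rewrite inE.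
rewrite -(pair_big_dep xpredT P (fun _ _ => 1%N)); apply: eq_bigr => x _.
by rewrite -sum1_card; apply: eq_bigl => y; rewrite inE.
Qed.

Section Layers.
Variables (n : nat) (g : graph n) (u : 'I_n).

Definition layer (j : nat) : {set 'I_n} := ball g u j.+1 :\: ball g u j.

Lemma ball_subS j : ball g u j \subset ball g u j.+1.
Proof. exact: subsetUl. Qed.

Lemma ball_mono : {homo ball g u : j k / (j <= k)%N >-> j \subset k}.
Proof.
apply: homo_leq => [A | B A C | j]; [exact: subxx | exact: subset_trans | exact: ball_subS].
Qed.

Lemma mem_ballS j w y : w \in ball g u j -> y \in g w -> y \in ball g u j.+1.
Proof. by move=> w_in y_w; rewrite /= inE; apply/orP; right; apply/bigcupP; exists w. Qed.

Lemma ballS_parent j y : y \in ball g u j.+1 -> y \notin ball g u j ->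
  exists2 w, w \in ball g u j & y \in g w.
Proof. by rewrite /= inE => /orP[-> //|/bigcupP[w w_in y_w]] _; exists w. Qed.

Lemma layer_parent j y : y \in layer j.+1 -> exists2 w, w \in layer j & y \in g w.
Proof.
rewrite inE => /andP[y_out y_in]; have [w w_in y_w] := ballS_parent y_in y_out.
exists w => //; rewrite inE w_in andbT.
by apply: contra y_out => /mem_ballS; apply.
Qed.

Lemma notin_layer_pred j y : y \in layer j.+1 -> y \notin layer j.
Proof. by rewrite !inE => /andP[y_out _]; apply: contra y_out => /andP[]. Qed.

Lemma card_layer_boundary r :
  (#|layer r| <= e_between g (ball g u r) (~: ball g u r))%N.
Proof.
apply: leq_trans (leq_imset_card snd _); apply: subset_leq_card.
apply/subsetP => y; rewrite inE => /andP[y_out y_in].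
have [w w_in y_w] := ballS_parent y_in y_out.
by apply/imsetP; exists (w, y); rewrite // inE /= w_in inE y_out y_w.
Qed.

Lemma dist_is_le v k r : dist_is g u v k -> v \in ball g u r -> (k <= r)%N.
Proof. by case=> _ far v_in; rewrite leqNgt; apply: contraL v_in; apply: far. Qed.

Lemma dist_is_gt v k r : dist_is g u v k -> v \notin ball g u r -> (r < k)%N.
Proof.
case=> v_in _; rewrite ltnNge; apply: contra => le_kr.
exact: subsetP (ball_mono le_kr) _ v_in.
Qed.

Lemma dist_is_uniq v k k' : dist_is g u v k -> dist_is g u v k' -> k = k'.
Proof.
move=> dk dk'; apply/eqP; rewrite eqn_leq.
by rewrite (dist_is_le dk dk'.1) (dist_is_le dk' dk.1).
Qed.

Lemma dist_is_layer v k : dist_is g u v k.+1 -> v \in layer k.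
Proof. by case=> v_in far; rewrite inE v_in far. Qed.

End Layers.

Definition sparse_at (R : realType) n (eps C : R) (g : graph n) : Prop :=
  forall S : {set {set 'I_n}}, (forall e, e \in S -> is_edge g e) ->
    eps * n%:R <= #|S|%:R ->
    forall X : {set 'I_n}, node_cover S X -> #|S|%:R / C <= #|X|%:R.

Lemma sparse_layer_step (R : realType) n (g : graph n) (eps C : R) u j :
  sparse_at eps C g -> eps * n%:R <= #|layer g u j.+1|%:R ->
  #|layer g u j.+1|%:R / C <= #|layer g u j|%:R.
Proof.
move=> sparse large.
pose par y := odflt y [pick w in layer g u j | y \in g w].
have parP y : y \in layer g u j.+1 -> par y \in layer g u j /\ y \in g (par y).
  move=> /layer_parent[w w_in y_w]; rewrite /par.
  by case: pickP => [w' /andP[] | /(_ w)] //; rewrite w_in y_w.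
have par_neq y : y \in layer g u j.+1 -> par y != y.
  move=> y_in; have [par_in _] := parP y y_in.
  by apply: contraTneq par_in => ->; apply: notin_layer_pred.
pose S := [set [set par y; y] | y in layer g u j.+1].
have cardS : #|S| = #|layer g u j.+1|.
  apply: card_in_imset => y1 y2 y1_in y2_in eq_e.
  have : y1 \in [set par y2; y2] by rewrite -eq_e !inE eqxx orbT.
  rewrite !inE => /orP[/eqP y1_par|/eqP //].
  have [par_in _] := parP y2 y2_in.
  by move: (notin_layer_pred y1_in); rewrite y1_par par_in.
rewrite -cardS; apply: sparse; rewrite ?cardS //.
- move=> e /imsetP[y y_in ->]; have [_ y_par] := parP y y_in.
  by apply/existsP; exists (par y); apply/existsP; exists y; rewrite eqxx y_par par_neq.
- apply/forall_inP => _ /imsetP[y y_in ->]; have [par_in _] := parP y y_in.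
  by rewrite -setI_eq0; apply/set0Pn; exists (par y); rewrite in_setI in_set2 eqxx par_in.
Qed.

Section GraphEvents.
Variables (R : realType) (M : random_model R) (n : nat).

Lemma prob_graph_and (A B : graph n -> Prop) :
  prob_graph M A + prob_graph M B - 1 <= prob_graph M (fun g => A g /\ B g).
Proof.
rewrite /prob_graph -[X in _ - X](Pr_sum1 M n) -big_split -sumrB /=.
apply: ler_sum => g _; have := Pr_ge0 M g.
by case: (asboolP (A g)) => a; case: (asboolP (B g)) => b;
  case: asboolP => ab /=; try tauto; rewrite ?mulr1 ?mulr0; lra.
Qed.

Lemma le_prob_graph (A B : graph n -> Prop) : (forall g, A g -> B g) ->
  prob_graph M A <= prob_graph M B.
Proof.
move=> AB; apply: ler_sum => g _; have := Pr_ge0 M g.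
by case: (asboolP (A g)) => [/AB|] a; case: asboolP => b /=; try tauto;
  rewrite ?mulr1 ?mulr0; lra.
Qed.

Lemma prob_graph_T (A : graph n -> Prop) : (forall g, A g) -> prob_graph M A = 1.
Proof.
move=> allA; rewrite -(Pr_sum1 M n); apply: eq_bigr => g _.
by rewrite asboolT // mulr1.
Qed.

End GraphEvents.

Definition large_layers_propagate (R : realType) n (m : nat) (eta alpha : R)
    (g : graph n) : Prop :=
  forall u j t, (t <= m)%N -> eta * n%:R <= #|layer g u (j + t)|%:R ->
    alpha * n%:R <= #|layer g u j|%:R.

Lemma large_layers_propagate0 (R : realType) n (eta : R) (g : graph n) :
  large_layers_propagate 0 eta eta g.
Proof. by move=> u j t; rewrite leqn0 => /eqP ->; rewrite addn0. Qed.

Lemma large_layers_propagateS (R : realType) n m (eta C alpha : R) (g : graph n) :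
  0 < C -> alpha <= eta -> sparse_at eta C g ->
  large_layers_propagate m (Num.min (eta / C) eta) alpha g ->
  large_layers_propagate m.+1 eta alpha g.
Proof.
move=> C_gt0 le_alpha sparse prop u j [|t] le_tm large.
  by rewrite addn0 in large; apply: le_trans large; rewrite ler_wpM2r.
apply: (prop u j t le_tm); rewrite addnS in large.
apply: le_trans (sparse_layer_step sparse large).
apply: (@le_trans _ _ (eta / C * n%:R)); first by rewrite ler_wpM2r ?ge_min ?lexx.
by rewrite mulrAC ler_wpM2r // invr_ge0 ltW.
Qed.

Lemma large_layers_propagate_whp (R : realType) (M : random_model R) m (eta : R) :
  US M -> 0 < eta -> exists alpha : R, [/\ 0 < alpha, alpha <= eta & exists N,
    forall n, (N <= n)%N ->
      1 - m%:R * eta <= prob_graph M (n:=n) (large_layers_propagate m eta alpha)].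
Proof.
move=> us; elim: m eta => [|m IH] eta eta_gt0.
  exists eta; split=> //; exists 0%N => n _.
  by rewrite prob_graph_T ?mul0r ?subr0 //; apply: large_layers_propagate0.
have [C [C_gt0 [N1 sparseN]]] := us eta eta_gt0.
set eta' := Num.min (eta / C) eta.
have eta'_gt0 : 0 < eta' by rewrite lt_min eta_gt0 divr_gt0.
have le_eta' : eta' <= eta by rewrite ge_min lexx orbT.
have [alpha [alpha_gt0 le_alpha [N2 propN]]] := IH eta' eta'_gt0.
exists alpha; split=> //; first exact: le_trans le_eta'.
exists (maxn N1 N2) => n; rewrite geq_max => /andP[/sparseN sparse /propN prop].
have step (g : graph n) : sparse_at eta C g /\ large_layers_propagate m eta' alpha g ->
    large_layers_propagate m.+1 eta alpha g.
  by case; apply: large_layers_propagateS => //; apply: le_trans le_eta'.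
apply: le_trans _ (le_prob_graph M step).
apply: le_trans _ (prob_graph_and M _ _); rewrite -natr1.
have : m%:R * eta' <= m%:R * eta by rewrite ler_wpM2l.
move: sparse prop; rewrite /sparse_at; lra.
Qed.

Definition pump_at (R : realType) n (eps alpha : R) (g : graph n) (u : 'I_n) : Prop :=
  (exists r, eps * n%:R <= #|ball g u r|%:R) /\
  (forall r, eps * n%:R <= #|ball g u r|%:R ->
     #|ball g u r|%:R <= (1 - eps) * n%:R ->
     alpha * #|ball g u r|%:R <= (e_between g (ball g u r) (~: ball g u r))%:R).

Section DistanceWindow.
Variables (n : nat) (g : graph n) (u : 'I_n) (W : {set 'I_n}) (L : nat).
Hypothesis W_reach : forall v, v \in W -> exists k, dist_is g u v k.
Hypothesis W_window : forall v w kv kw, v \in W -> w \in W ->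
  dist_is g u v kv -> dist_is g u w kw -> (kv < kw + L)%N.

Lemma window_sub_ball w : w \in W -> exists r, W \subset ball g u r.
Proof.
move=> w_W; have [kw dw] := W_reach w_W; exists (kw + L)%N.
apply/subsetP => v v_W; have [kv dv] := W_reach v_W.
by apply: subsetP (ball_mono _ _ (ltnW (W_window v_W w_W dv dw))) _ dv.1.
Qed.

Lemma window_out_ball w r : w \in W -> w \in ball g u r ->
  W :\: ball g u r \subset \bigcup_(t < L) layer g u (r + t).
Proof.
move=> w_W w_in; have [kw dw] := W_reach w_W; have le_kw := dist_is_le dw w_in.
apply/subsetP => v; rewrite inE => /andP[v_out v_W]; have [kv dv] := W_reach v_W.
have lt_kv := W_window v_W w_W dv dw; have lt_r := dist_is_gt dv v_out.
have [k kv_eq] : exists k, kv = k.+1 by exists kv.-1; lia.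
have lt_t : (k - r < L)%N by lia.
apply/bigcupP; exists (Ordinal lt_t) => //=.
by rewrite subnKC; [apply: dist_is_layer; rewrite -kv_eq | lia].
Qed.

Variables (R : realType) (eps eta alpha : R).
Hypotheses (n_gt0 : (0 < n)%N) (eps_gt0 : 0 < eps) (eps_lt : eps < 2^-1).

Lemma exists_large_ball : #|~: W|%:R <= eps / 2 * n%:R ->
  exists r, eps * n%:R <= #|ball g u r|%:R.
Proof.
move=> W_large.
have cardW : #|W|%:R + #|~: W|%:R = n%:R :> R by rewrite -natrD cardsC card_ord.
have eps_n : eps * n%:R <= 2^-1 * n%:R :> R by rewrite ler_wpM2r ?ler0n ?ltW.
have n_pos : 0 < n%:R :> R by rewrite ltr0n.
have : (0 < #|W|)%N by rewrite -(ltr_nat R); lra.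
rewrite card_gt0 => /set0Pn[w w_W].
have [r /subset_leq_card W_le] := window_sub_ball w_W; exists r.
by apply: le_trans (_ : #|W|%:R <= _); [lra | rewrite ler_nat].
Qed.

Lemma ball_boundary_large r :
  #|~: W|%:R <= eps / 2 * n%:R -> L%:R * eta <= eps / 4 -> 0 <= alpha ->
  large_layers_propagate L eta alpha g ->
  eps * n%:R <= #|ball g u r|%:R -> #|ball g u r|%:R <= (1 - eps) * n%:R ->
  alpha * #|ball g u r|%:R <= (e_between g (ball g u r) (~: ball g u r))%:R.
Proof.
set B := ball g u r => W_large L_eta alpha_ge0 propagate B_large B_small.
have cardB : #|B|%:R + #|~: B|%:R = n%:R :> R by rewrite -natrD cardsC card_ord.
have epsn_gt0 : 0 < eps * n%:R :> R by rewrite mulr_gt0 ?ltr0n.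
have [t large] : exists t : 'I_L, eta * n%:R <= #|layer g u (r + t)|%:R.
  apply/existsP; apply: contraLR B_small => /existsPn small; rewrite -ltNge.
  have /subsetPn[w w_B] : ~~ (B \subset ~: W).
    by apply/negP => /subset_leq_card; rewrite -(ler_nat R); lra.
  rewrite inE negbK => w_W.
  have out_le : (#|~: B| <= #|~: W| + \sum_(t < L) #|layer g u (r + t)|)%N.
    have /subset_leq_card : ~: B \subset ~: W :|: (W :\: B).
      by apply/subsetP => v; rewrite !inE => ->; case: (v \in W).
    move/leq_trans; apply; apply: leq_trans (leq_card_setU _ _) _.
    rewrite leq_add2l; apply: leq_trans (leq_card_bigcup _).
    exact/subset_leq_card/(window_out_ball w_W w_B).
  have layers_small : (\sum_(t < L) #|layer g u (r + t)|)%:R <= eps / 4 * n%:R :> R.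
    rewrite natr_sum; apply: (@le_trans _ _ (\sum_(t < L) eta * n%:R)).
      by apply: ler_sum => t _; rewrite ltW // ltNge small.
    by rewrite sumr_const card_ord -[_ *+ L]mulr_natl mulrA ler_wpM2r ?ler0n.
  move: out_le; rewrite -(ler_nat R) natrD; lra.
have := propagate _ _ _ (ltnW (ltn_ord t)) large.
have := card_layer_boundary g u r; rewrite -(ler_nat R) -/B.
have : alpha * #|B|%:R <= alpha * n%:R.
  by rewrite ler_wpM2l // ler_nat -[n in (_ <= n)%N]card_ord max_card.
lra.
Qed.

Lemma pump_at_window :
  #|~: W|%:R <= eps / 2 * n%:R -> L%:R * eta <= eps / 4 -> 0 <= alpha ->
  large_layers_propagate L eta alpha g -> pump_at eps alpha g u.
Proof.
move=> W_large L_eta alpha_ge0 propagate.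
by split=> [|r]; [apply: exists_large_ball | apply: ball_boundary_large].
Qed.

End DistanceWindow.

Lemma markov_count (R : numDomainType) (T : finType) (F : T -> nat) (c : R) :
  0 <= c -> #|[set x | c < (F x)%:R]|%:R * c <= (\sum_x F x)%:R.
Proof.
move=> c_ge0; rewrite -sum1_card !natr_sum mulr_suml.
apply: (@le_trans _ _ (\sum_(x in [set x | c < (F x)%:R]) (F x)%:R)).
  by apply: ler_sum => x; rewrite inE mul1r => /ltW.
by rewrite [leRHS](bigID [in [set x | c < (F x)%:R]]) /= lerDl sumr_ge0.
Qed.

Lemma frac_bad_rows (R : numFieldType) (T : finType) (Q : rel T) (c : R) :
  (0 < #|T|)%N -> 0 < c ->
  #|[set x | c * #|T|%:R < #|~: [set y | Q x y]|%:R]|%:R / #|T|%:R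
    <= #|~: [set p : T * T | Q p.1 p.2]|%:R / (#|T| * #|T|)%:R / c.
Proof.
move=> T_gt0 c_gt0; have T_pos : 0 < #|T|%:R :> R by rewrite ltr0n.
have bad_pairs : #|~: [set p : T * T | Q p.1 p.2]| = (\sum_x #|~: [set y | Q x y]|)%N.
  rewrite (eq_card (B := [set p : T * T | ~~ Q p.1 p.2])) => [|p]; last by rewrite !inE.
  rewrite (card_set_pairs (fun x y => ~~ Q x y)); apply: eq_bigr => x _.
  by apply: eq_card => y; rewrite !inE.
have -> : #|~: [set p : T * T | Q p.1 p.2]|%:R / (#|T| * #|T|)%:R / c
    = #|~: [set p : T * T | Q p.1 p.2]|%:R / (c * #|T|%:R) / #|T|%:R :> R.
  by rewrite natrM; field; rewrite !gt_eqF.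
rewrite ler_wpM2r ?invr_ge0 ?ler0n // ler_pdivlMr ?mulr_gt0 // bad_pairs.
by apply: markov_count; rewrite mulr_ge0 ?ltW.
Qed.

Lemma frac_setC (R : numFieldType) (T : finType) (A : {set T}) : (0 < #|T|)%N ->
  #|A|%:R / #|T|%:R = 1 - #|~: A|%:R / #|T|%:R :> R.
Proof.
move=> T_gt0; apply/eqP; rewrite eq_sym subr_eq -mulrDl -natrD cardsC.
by rewrite divff // pnatr_eq0 -lt0n.
Qed.

Definition dist_near (R : realType) n (f b : R) (g : graph n) (u v : 'I_n) : Prop :=
  exists k, dist_is g u v k /\ `|f - k%:R| < b.

Lemma dist_near_window (R : realType) n (f b : R) (L : nat) (g : graph n) u v w kv kw :
  b + b <= L%:R -> dist_near f b g u v -> dist_near f b g u w ->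
  dist_is g u v kv -> dist_is g u w kw -> (kv < kw + L)%N.
Proof.
move=> bL [kv' [dv' near_v]] [kw' [dw' near_w]] dv dw.
rewrite -(dist_is_uniq dv' dv) -(dist_is_uniq dw' dw) -(ltr_nat R) natrD.
by move: near_v near_w; rewrite !ltr_norml; lra.
Qed.

Lemma pump_frac_lower_bound (R : realType) n (g : graph n) (f b eps eta alpha : R) L :
  (0 < n)%N -> 0 < eps -> eps < 2^-1 -> b + b <= L%:R -> L%:R * eta <= eps / 4 ->
  0 <= alpha ->
  (`[< large_layers_propagate L eta alpha g >])%:R
    - (1 - #|[set p : 'I_n * 'I_n | `[< dist_near f b g p.1 p.2 >]]|%:R / (n * n)%:R)
      / (eps / 2)
  <= #|[set u | `[< pump_at eps alpha g u >]]|%:R / n%:R.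
Proof.
move=> n_gt0 eps_gt0 eps_lt bL L_eta alpha_ge0.
pose Q u v := `[< dist_near f b g u v >].
set P := [set p : 'I_n * 'I_n | _]; set E := [set u : 'I_n | _].
have n_pos : 0 < n%:R :> R by rewrite ltr0n.
have P_le1 : #|P|%:R / (n * n)%:R <= 1 :> R.
  rewrite ler_pdivrMr ?ltr0n ?muln_gt0 ?n_gt0 // mul1r ler_nat.
  by apply: leq_trans (max_card P) _; rewrite card_prod card_ord.
have E_ge0 : 0 <= #|E|%:R / n%:R :> R by rewrite divr_ge0.
case: asboolP => [prop | _] /=; last first.
  by apply: le_trans E_ge0; rewrite sub0r oppr_le0 divr_ge0 ?subr_ge0 // divr_ge0 ?ltW.
pose good := [set u | #|~: [set v | Q u v]|%:R <= eps / 2 * n%:R :> R].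
have good_sub : good \subset E.
  apply/subsetP => u; rewrite !inE => W_large; apply/asboolP.
  apply: (pump_at_window _ _ n_gt0 eps_gt0 eps_lt W_large L_eta alpha_ge0 prop).
    by move=> v; rewrite inE => /asboolP[k [dk _]]; exists k.
  move=> v w kv kw; rewrite !inE => /asboolP near_v /asboolP near_w.
  exact: dist_near_window bL near_v near_w.
have eps2_gt0 : 0 < eps / 2 by rewrite divr_gt0.
have := @frac_bad_rows R _ Q (eps / 2); rewrite card_ord => /(_ n_gt0 eps2_gt0) bad_frac.
have compl_P : #|~: P|%:R / (n * n)%:R = 1 - #|P|%:R / (n * n)%:R :> R.
  by have := @frac_setC R _ (~: P); rewrite setCK card_prod card_ord muln_gt0 n_gt0; apply.
have compl_good : #|~: good| = #|[set u | eps / 2 * n%:R < #|~: [set v | Q u v]|%:R]|.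
  by apply: eq_card => u; rewrite !inE ltNge.
apply: (@le_trans _ _ (#|good|%:R / n%:R)).
  have := @frac_setC R _ good; rewrite card_ord => /(_ n_gt0) ->.
  by rewrite compl_good -compl_P lerD2l lerN2.
by rewrite ler_wpM2r ?invr_ge0 ?ler0n // ler_nat subset_leq_card.
Qed.

Lemma sum_Pr_affine (R : realType) (M : random_model R) n (a b : graph n -> R) (c : R) :
  \sum_g Pr M n g * (a g - (1 - b g) / c)
  = \sum_g Pr M n g * a g - (1 - \sum_g Pr M n g * b g) / c.
Proof.
under eq_bigr do rewrite mulrBr; rewrite sumrB; congr (_ - _).
rewrite -[in RHS](Pr_sum1 M n) -sumrB mulr_suml; apply: eq_bigr => g _.
by rewrite mulrA mulrBr mulr1.
Qed.

Lemma exists_pos_nat_ge (R : archiRealDomainType) (x : R) :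
  exists2 L : nat, (0 < L)%N & x <= L%:R.
Proof.
exists (Num.bound `|x|).+1 => //; apply: le_trans (ler_norm x) _.
by rewrite ltW // (lt_le_trans (archi_boundP (normr_ge0 x))) // ler_nat.
Qed.

Unset Implicit Arguments.

Theorem lemma3 (R : realType) (M : random_model R) :
  SI M -> US M -> PUMP M.
Proof.
move=> [f si] us eps eps_gt0 eps_lt.
have epsSq_gt0 : 0 < eps * eps / 8 by rewrite divr_gt0 ?mulr_gt0.
have [b [N1 nearN]] := si _ epsSq_gt0.
have [L L_gt0 bL] := exists_pos_nat_ge (b + b).
pose eta := eps / 4 / L%:R.
have L_eta : L%:R * eta <= eps / 4 by rewrite /eta mulrC divfK ?lexx // pnatr_eq0 -lt0n.
have eta_gt0 : 0 < eta by rewrite !divr_gt0 ?ltr0n.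
have [alpha [alpha_gt0 _ [N2 propN]]] := large_layers_propagate_whp L us eta_gt0.
exists alpha; split=> //; exists (maxn 1 (maxn N1 N2)) => n.
rewrite !geq_max => /and3P[n_gt0 /nearN near /propN prop].
have per_graph (g : graph n) := ler_wpM2l (Pr_ge0 M g)
  (pump_frac_lower_bound g (f n) n_gt0 eps_gt0 eps_lt bL L_eta (ltW alpha_gt0)).
apply: lt_le_trans _ (ler_sum _ (fun g _ => per_graph g)).
rewrite sum_Pr_affine.
have : (1 - prob_pair M (fun (g : graph n) u v => dist_near (f n) b g u v)) / (eps / 2)
    < eps / 4.
  by rewrite ltr_pdivrMr ?divr_gt0 //; move: near; rewrite /prob_pair /dist_near; lra.
move: prop; rewrite /prob_graph /prob_pair; lra.
Qed.
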